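(* Let $\sigma$ be a reasonable strategy of player $0$ in the escape arena $\mathcal{A}_\bot$. If there is a vertex $s\in W_0$ with $\mathcal{V}_\sigma(s)\prec\infty$, then $\sigma$ has at least one strict improvement, i.e. $S_\sigma\neq\emptyset$.
   Context: Parity game arena: $\mathcal{A}=(V,E,o,c)$ with $V$ finite, $E\subseteq V\times V$, every vertex has a successor, owner map $o:V\to\{0,1\}$, colouring $c:V\to\{0,\dots,d-1\}$; $V_i=o^{-1}(i)$. An infinite vertex sequence is won by player $0$ iff the largest colour occurring infinitely often is even. A cycle is $i$-dominated if its largest colour has parity $i$. $W_0$ is the set of vertices from which player $0$ has a winning strategy in the parity game on $\mathcal{A}$. Escape arena $\mathcal{A}_\bot$: vertices $V\cup\{\bot\}$, edges $E\cup(V_0\times\{\bot\})$, $\bot$ owned by player $0$ with no outgoing edges. $E_0$ = edges of $\mathcal{A}_\bot$ leaving $V_0$, $E_1=E\cap(V_1\times V)$. A strategy of player $i$ is a set $\sigma\subseteq E_i$ with $s\sigma\neq\emptyset$ for all $s\in V_i$. $\mathcal{A}_\bot|_{\sigma,\tau}$ has edges $\sigma\cup\tau$, $\mathcal{A}_\bot|_\sigma$ has edges $\sigma\cup E_1$; plays are maximal paths. Colour profiles $\mathcal{P}=\mathbb{Z}^d\cup\{-\infty,\infty\}$, $\text{\o}$ zero vector; $\wp(s)$ unit vector at coordinate $c(s)$; for a finite path the sum over vertices in $V$; infinite play: $\infty$ if won by player $0$, else $-\infty$. Addition componentwise, $x+\pm\infty=\pm\infty$. Order $\prec$: $-\infty$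 least, $\infty$ greatest; for distinct $p,p'\in\mathbb{Z}^d$ with $k$ the largest differing index, $p\prec p'$ iff ($k$ even, $p_k<p'_k$) or ($k$ odd, $p_k>p'_k$). Valuation: $\mathcal{V}_\sigma(\bot)=\text{\o}$, $\mathcal{V}_\sigma(s)=\min^\prec_\tau\max^\prec\{\wp(\pi)\mid\pi$ a play in $\mathcal{A}_\bot|_{\sigma,\tau}$ from $s\}$. $\sigma$ is reasonable if $\mathcal{A}_\bot|_\sigma$ has no $1$-dominated cycle. $S_\sigma$ is the set of edges $(s,t)\in E_0$ with $\mathcal{V}_\sigma(s)\prec\wp(s)+\mathcal{V}_\sigma(t)$ (strict improvements). *)

From mathcomp Require Import all_boot all_order all_algebra.
From Stdlib Require Import ClassicalEpsilon.
Set Implicit Arguments. Unset Strict Implicit. Unset Printing Implicit Defensive.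
Import Order.TTheory GRing.Theory Num.Theory.

(* Owner: [own v = false] means v ∈ V_0,
   [own v = true] means v ∈ V_1.
   The "every vertex has a successor" condition is a hypothesis of the theorem. *)
Record arena := Arena {
  vtx : finType;
  edge : rel vtx;
  own : vtx -> bool;
  ncol : nat;
  col : vtx -> 'I_ncol }.

Section ParityDefs.
Variable A : arena.
Notation V := (vtx A).
Notation E := (@edge A).
Notation o := (@own A).
Notation d := (ncol A).
Notation c := (@col A).

Definition infoften (g : nat -> nat) (k : nat) : Prop :=
  forall N, exists i, N <= i /\ g i = k.

Definition won0 (g : nat -> nat) : Prop :=
  exists k, infoften g k /\ ~~ odd k /\ forall k', infoften g k' -> k' <= k.

Definition pstrat0 (str : seq V -> V -> V) : Prop :=
  forall h v, o v = false -> E v (str h v).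

Definition consistent_play (str : seq V -> V -> V) (s : V) (f : nat -> V) : Prop :=
  f 0 = s /\ forall i, E (f i) (f i.+1) /\
    (o (f i) = false -> f i.+1 = str (mkseq f i) (f i)).

Definition W0 (s : V) : Prop :=
  exists str, pstrat0 str /\
    forall f, consistent_play str s f -> won0 (fun i => nat_of_ord (c (f i))).

(* ---------- escape arena A_⊥ : vertices option V, None = ⊥ ---------- *)
Definition eedge (u w : option V) : bool :=
  match u, w with
  | Some a, Some b => E a b
  | Some a, None => ~~ o a
  | None, _ => false
  end.

Definition E0 (u w : option V) : bool :=
  match u with Some a => ~~ o a && eedge u w | None => false end.

Definition E1 (u w : option V) : bool :=
  match u, w with Some a, Some b => o a && E a b | _, _ => false end.

Definition strat0 (sigma : rel (option V)) : Prop :=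
  (forall u w, sigma u w -> E0 u w) /\
  (forall s, o s = false -> exists t, sigma (Some s) t).

Definition strat1 (tau : rel (option V)) : Prop :=
  (forall u w, tau u w -> E1 u w) /\
  (forall s, o s = true -> exists t, tau (Some s) t).

(* colour of a vertex of A_⊥ (⊥ never lies on a cycle or infinite play) *)
Definition ocol (u : option V) : nat :=
  if u is Some v then nat_of_ord (c v) else 0.

Definition reasonable (sigma : rel (option V)) : Prop :=
  let G := fun u w => sigma u w || E1 u w in
  ~ exists (x : option V) (p : seq (option V)),
      [/\ p <> [::], path G x p, last x p = x &
          odd (foldr maxn 0 (map ocol (x :: p)))].

Inductive prof : Type :=
  | PNeg
  | PPos
  | PFin of {ffun 'I_d -> int}.

Definition pzero : prof := PFin [ffun _ => 0%R].

Definition padd (x y : prof) : prof :=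
  match x, y with
  | PFin a, PFin b => PFin [ffun j => (a j + b j)%R]
  | PFin _, _ => y
  | _, _ => x
  end.

Definition vprof (u : option V) : prof :=
  PFin [ffun j => Posz (if u is Some v then (c v == j : nat) else 0%N)].

Definition finprof (p : seq (option V)) : prof :=
  PFin [ffun j => Posz (count (fun u => if u is Some v then c v == j else false) p)].

Definition finlt (a b : {ffun 'I_d -> int}) : Prop :=
  exists k : 'I_d, (forall j : 'I_d, k < j -> a j = b j) /\ a k <> b k /\
    (if odd k then (b k < a k)%R else (a k < b k)%R).

Definition plt (x y : prof) : Prop :=
  match x, y with
  | PNeg, PNeg => False
  | PNeg, _ => True
  | PFin _, PNeg => False
  | PFin a, PFin b => finlt a b
  | PFin _, PPos => True
  | PPos, _ => False
  end.

Definition ple (x y : prof) : Prop := plt x y \/ x = y.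

Definition gst (sigma tau : rel (option V)) (u w : option V) : bool :=
  sigma u w || tau u w.

Definition play_prof (sigma tau : rel (option V)) (u : option V) (x : prof) : Prop :=
  (exists p : seq (option V),
      path (gst sigma tau) u p /\
      (forall w, ~~ gst sigma tau (last u p) w) /\
      x = finprof (u :: p)) \/
  (exists f : nat -> option V,
      f 0 = u /\ (forall i, gst sigma tau (f i) (f i.+1)) /\
      (won0 (fun i => ocol (f i)) -> x = PPos) /\
      (~ won0 (fun i => ocol (f i)) -> x = PNeg)).

Definition isMax (P : prof -> Prop) (x : prof) : Prop :=
  P x /\ forall y, P y -> ple y x.
Definition isMin (P : prof -> Prop) (x : prof) : Prop :=
  P x /\ forall y, P y -> ple x y.

Definition val_spec (sigma : rel (option V)) (s : V) (x : prof) : Prop :=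
  isMin (fun v => exists tau, strat1 tau /\ isMax (play_prof sigma tau (Some s)) v) x.

Definition Val (sigma : rel (option V)) (u : option V) : prof :=
  match u with
  | None => pzero
  | Some s => epsilon (inhabits PNeg) (val_spec sigma s)
  end.

Definition improvement (sigma : rel (option V)) (u w : option V) : Prop :=
  E0 u w /\ plt (Val sigma u) (padd (vprof u) (Val sigma w)).

End ParityDefs.

(* Suppose sigma has no strict improvement. Then V_sigma(s) dominates
   p(s) + V_sigma(t) along every edge leaving V_0, and along the first edge of an
   optimal counter-strategy at every vertex of V_1. Following player 0's winning
   strategy from s against these player-1 moves yields a play won by player 0
   along which V_sigma descends in this sense. Reasonableness makes every value
   on it finite (infinite plays against sigma are won, so no value is -oo, and
   none is +oo since V_sigma(s) < +oo). Take two visits of the same vertex, both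
   with the largest colour k seen infinitely often, late enough that no larger
   colour occurs: the colour profile of the segment between them is positive
   (its top non-zero entry is at the even index k), yet V_sigma does not grow
   along it, a contradiction. *)

From Pilot Require Import Defs.
From mathcomp Require Import all_boot all_order all_algebra.
From Stdlib Require Import Classical ClassicalEpsilon FunctionalExtensionality.
Set Implicit Arguments. Unset Strict Implicit. Unset Printing Implicit Defensive.
Import Order.TTheory GRing.Theory Num.Theory.

Lemma fin_argmax (T : finType) (R : T -> T -> Prop) (Q : T -> Prop) :
  (forall x y, R x y \/ R y x) -> (forall x y z, R x y -> R y z -> R x z) ->
  (exists x, Q x) -> exists2 m, Q m & forall y, Q y -> R y m.
Proof.
move=> totR trR [x0 Qx0].
suff /(_ (enum T)) [|m Qm maxm] : forall s : seq T, (exists2 x, x \in s & Q x) ->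
    exists2 m, Q m & forall y, y \in s -> Q y -> R y m.
- by exists x0; rewrite ?mem_enum.
- by exists m => // y; apply: maxm; rewrite mem_enum.
elim=> [[//]|a s IHs] exQ.
have Raa : R a a by case: (totR a a).
case: (classic (exists2 x, x \in s & Q x)) => [/IHs[m Qm maxm]|nQs].
  have [[Qa Rma]|nQR] := classic (Q a /\ R m a).
    exists a => // y; rewrite in_cons => /predU1P[-> //|ys Qy].
    exact: trR (maxm y ys Qy) Rma.
  exists m => // y; rewrite in_cons => /predU1P[-> Qa|]; last exact: maxm.
  by case: (totR m a) => // Rma; case: nQR.
have Qa : Q a.
  by case: exQ => x; rewrite in_cons => /predU1P[-> //|xs Qx]; case: nQs; exists x.
by exists a => // y; rewrite in_cons => /predU1P[-> //|ys Qy]; case: nQs; exists y.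
Qed.

Lemma not_frequently (P : nat -> Prop) :
  ~ (forall N, exists i, N <= i /\ P i) -> exists M, forall i, M <= i -> ~ P i.
Proof.
move=> nP; apply: NNPP => nM; apply: nP => N; apply: NNPP => nN.
by apply: nM; exists N => i Ni Pi; apply: nN; exists i.
Qed.

Lemma infinite_pigeonhole (X : finType) (f : nat -> X) (P : nat -> Prop) :
  (forall N, exists i, N <= i /\ P i) ->
  exists x, forall N, exists i, N <= i /\ P i /\ f i = x.
Proof.
move=> infP; apply: NNPP => nx.
have bound (s : seq X) : exists N, forall i, N <= i -> P i -> f i \notin s.
  elim: s => [|x s [N HN]]; first by exists 0.
  have [M HM] := not_frequently (fun often_x => nx (ex_intro _ x often_x)).
  exists (maxn N M) => i; rewrite geq_max => /andP[Ni Mi] Pi.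
  by rewrite in_cons negb_or HN // andbT; apply/eqP => fx; apply: (HM i Mi).
have [N HN] := bound (enum X); have [i [Ni Pi]] := infP N.
by have := HN i Ni Pi; rewrite mem_enum.
Qed.

Lemma eventually_infoften (g : nat -> nat) d : (forall i, g i < d) ->
  exists N, forall i, N <= i -> infoften g (g i).
Proof.
move=> gd.
suff /(_ d) [N HN] : forall n, exists N, forall i, N <= i -> g i < n -> infoften g (g i).
  by exists N => i Ni; apply: HN.
elim=> [|n [N HN]]; first by exists 0.
have [ion|nion] := classic (infoften g n).
  exists N => i Ni; rewrite ltnS leq_eqVlt => /predU1P[-> //|]; exact: HN.
have [M HM] := not_frequently nion.
exists (maxn N M) => i; rewrite geq_max => /andP[Ni Mi].
by rewrite ltnS leq_eqVlt => /predU1P[/HM|] //; apply: HN.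
Qed.

Lemma infoften_max (g : nat -> nat) d : (forall i, g i < d) ->
  exists k, infoften g k /\ forall k', infoften g k' -> k' <= k.
Proof.
move=> gd; have [N HN] := eventually_infoften gd.
have [k iok maxk] := @fin_argmax 'I_d (fun k k' => k <= k') (fun k => infoften g k)
  (fun k k' => orP (leq_total k k')) (fun _ _ _ => @leq_trans _ _ _)
  (ex_intro _ (Ordinal (gd N)) (HN N (leqnn N))).
exists k; split=> // k' iok'.
have [i [_ gik']] := iok' 0.
by have := maxk (Ordinal (gd i)); rewrite /= gik'; apply.
Qed.

Lemma infoften_top_cycle (X : finType) (f : nat -> X) (g : nat -> nat) d k :
  (forall i, g i < d) -> infoften g k -> (forall k', infoften g k' -> k' <= k) ->
  exists i j, [/\ i < j, f i = f j, g i = k & forall t, i <= t -> g t <= k].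
Proof.
move=> gd iok maxk; have [N HN] := eventually_infoften gd.
have [x Hx] := infinite_pigeonhole f iok.
have [i [Ni [gi fi]]] := Hx N; have [j [ij [_ fj]]] := Hx i.+1.
exists i, j; split; rewrite ?fi ?fj // => t it.
by apply/maxk/HN; apply: leq_trans it.
Qed.

Lemma infoften_cons (g h : nat -> nat) k :
  (forall n, h n.+1 = g n) -> infoften h k <-> infoften g k.
Proof.
move=> hS; split=> iok N.
  by have [[|i] [Ni <-]] := iok N.+1 => //; exists i; rewrite hS.
by have [i [Ni <-]] := iok N; exists i.+1; rewrite hS; split=> //; apply: leqW.
Qed.

Lemma won0_cons (g h : nat -> nat) : (forall n, h n.+1 = g n) -> won0 h <-> won0 g.
Proof.
move=> hS; have io k := infoften_cons k hS.
split=> -[k [iok [evk maxk]]]; exists k.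
  by split; [apply/io|split=> // k' /io; apply: maxk].
by split; [apply/io|split=> // k' /io; apply: maxk].
Qed.

Lemma path_map_iota (T : Type) (e : rel T) (f : nat -> T) i n :
  (forall t, e (f t) (f t.+1)) -> path e (f i) [seq f t | t <- iota i.+1 n].
Proof. by move=> ef; elim: n i => [//|n IHn] i /=; rewrite ef IHn. Qed.

Lemma last_map_iota (T : Type) (f : nat -> T) i n :
  last (f i) [seq f t | t <- iota i.+1 n] = f (i + n).
Proof. by elim: n i => [|n IHn] i /=; rewrite ?addn0 ?IHn ?addSnnS. Qed.

Lemma closed_infinite_path (X : Type) (G : rel X) (S : X -> Prop) x :
  S x -> (forall y, S y -> exists z, S z /\ G y z) ->
  exists f : nat -> X, f 0 = x /\ forall i, G (f i) (f i.+1).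
Proof.
move=> Sx Sclosed.
pose next y := epsilon (inhabits x) (fun z => S z /\ G y z).
have nextP y : S y -> S (next y) /\ G y (next y).
  by move=> /Sclosed; apply: epsilon_spec.
exists (fun n => iter n next x); split=> // i.
have Si : S (iter i next x) by elim: i => //= i /nextP[].
exact: (nextP _ Si).2.
Qed.

Lemma long_path_infinite (X : finType) (G : rel X) x p :
  path G x p -> #|X| <= size p ->
  exists f : nat -> X, f 0 = x /\ forall i, G (f i) (f i.+1).
Proof.
move=> Gp long.
have /(uniqPn x)[i [j [ij js eqij]]] : ~~ uniq (x :: p).
  apply/negP => /card_uniqP size_xp.
  by have := max_card (mem (x :: p)); rewrite size_xp ltnNge long.
apply: (@closed_infinite_path _ G (fun y => exists2 t, t < j & nth x (x :: p) t = y)).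
  by exists 0 => //; apply: leq_ltn_trans ij.
move=> _ [t tj <-].
have tp : t < size p by rewrite -ltnS (leq_trans _ js).
exists (nth x p t); split; last exact: (pathP x Gp).
case: (ltnP t.+1 j) => tj'; first by exists t.+1.
by exists i => //; rewrite eqij (_ : j = t.+1) //; apply/eqP; rewrite eqn_leq tj' tj.
Qed.

Lemma history_recursion (X : Type) (x0 : X) (F : seq X -> X -> X) :
  exists f : nat -> X, f 0 = x0 /\ forall i, f i.+1 = F (mkseq f i) (f i).
Proof.
pose step (hx : seq X * X) := (rcons hx.1 hx.2, F hx.1 hx.2).
pose f n := (iter n step ([::], x0)).2.
have iterE n : iter n step ([::], x0) = (mkseq f n, f n).
  elim: n => [//|n IHn]; rewrite iterS IHn mkseqS; congr pair.
  by rewrite [f n.+1]/f iterS IHn.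
by exists f; split=> // i; rewrite /f iterS iterE.
Qed.

Section Profiles.
Variable A : arena.
Notation V := (vtx A).
Notation vec := {ffun 'I_(ncol A) -> int}.
Implicit Types (a b c : vec) (x y z : prof A).

Lemma finlt_irr a : ~ finlt a a.
Proof. by case=> k [_ []]. Qed.

Lemma finlt_trans a b c : finlt a b -> finlt b c -> finlt a c.
Proof.
move=> [k1 [ab [nab sab]]] [k2 [bc [nbc sbc]]].
have ac (j : 'I_(ncol A)) : maxn k1 k2 < j -> a j = c j.
  by rewrite gtn_max => /andP[/ab -> /bc].
case: (ltngtP k1 k2) => [lt12|lt21|/val_inj eqk].
- exists k2; rewrite ab //; split=> // j lt2j.
  by apply/ac; rewrite gtn_max lt2j (ltn_trans lt12).
- exists k1; rewrite -bc //; split=> // j lt1j.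
  by apply/ac; rewrite gtn_max lt1j (ltn_trans lt21).
- subst k2; exists k1; split=> [j|]; first by rewrite -(maxnn k1); apply: ac.
  have sac : if odd k1 then (c k1 < a k1)%R else (a k1 < c k1)%R.
    by case: odd sab sbc => sab sbc; [apply: lt_trans sbc sab|apply: lt_trans sab sbc].
  by split=> // eac; rewrite eac ltxx if_same in sac.
Qed.

Lemma finlt_total a b : [\/ a = b, finlt a b | finlt b a].
Proof.
have [/existsP[k0 nk0]|] := boolP [exists k, a k != b k]; last first.
  rewrite negb_exists => /forallP eqab.
  by constructor 1; apply/ffunP => k; apply/eqP/negPn.
case: (@arg_maxnP _ k0 (fun k => a k != b k) val nk0) => k nk kmax.
have above (j : 'I_(ncol A)) : k < j -> a j = b j.
  by move=> kj; apply/eqP; apply: contraTT kj => /kmax; rewrite -leqNgt.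
have nk' : a k <> b k by apply/eqP.
case: ltgtP nk => [lt|gt|] // _; case ok: (odd k).
- by constructor 3; exists k; rewrite ok; split=> [j /above|] //; split=> // /esym.
- by constructor 2; exists k; rewrite ok.
- by constructor 2; exists k; rewrite ok.
- by constructor 3; exists k; rewrite ok; split=> [j /above|] //; split=> // /esym.
Qed.

Lemma finlt_addl c a b :
  finlt a b -> finlt [ffun j => (c j + a j)%R] [ffun j => (c j + b j)%R].
Proof.
move=> [k [ab [nab sab]]]; exists k; rewrite !ffunE; split.
  by move=> j /ab; rewrite !ffunE => ->.
by split; [move/addrI|rewrite !ltrD2l].
Qed.

Lemma plt_irr x : ~ plt x x.
Proof. by case: x => [||a] //=; apply: finlt_irr. Qed.

Lemma plt_trans x y z : plt x y -> plt y z -> plt x z.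
Proof. by case: x => [||a]; case: y => [||b]; case: z => [||c] //=; apply: finlt_trans. Qed.

Lemma ple_trans x y z : ple x y -> ple y z -> ple x z.
Proof. by move=> [xy|->] [yz|<-]; [left; apply: plt_trans yz|left|left|right]. Qed.

Lemma plt_ple_trans x y z : plt x y -> ple y z -> plt x z.
Proof. by move=> xy [yz|<-] //; apply: plt_trans yz. Qed.

Lemma ple_plt_trans x y z : ple x y -> plt y z -> plt x z.
Proof. by move=> [xy|->] yz //; apply: plt_trans yz. Qed.

Lemma ple_antisym x y : ple x y -> ple y x -> x = y.
Proof. by move=> [xy|//] [yx|//]; case: (plt_irr (plt_trans xy yx)). Qed.

Lemma nplt_ple x y : ~ plt x y -> ple y x.
Proof.
case: x => [||a]; case: y => [||b] //= nxy; rewrite /ple /=; auto.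
by case: (finlt_total a b) => [->|/nxy|]; auto.
Qed.

Lemma ple_total x y : ple x y \/ ple y x.
Proof. by case: (classic (plt y x)) => [?|/nplt_ple]; [right; left|left]. Qed.

Lemma ple_PPos x : ple x (PPos A).
Proof. by case: x; [left|right|left]. Qed.

Lemma paddA x y z : padd x (padd y z) = padd (padd x y) z.
Proof.
case: x => [||a]; case: y => [||b]; case: z => [||c] //=.
by congr PFin; apply/ffunP => j; rewrite !ffunE addrA.
Qed.

Lemma padd0p x : padd (pzero A) x = x.
Proof. by case: x => [||a] //=; congr PFin; apply/ffunP => j; rewrite !ffunE add0r. Qed.

Lemma ple_padd2l x y z : ple y z -> ple (padd x y) (padd x z).
Proof.
move=> [yz|<-]; last by right.
case: x => [||a]; try by right.
case: y yz => [||b]; case: z => [||c] //= yz; rewrite /ple /=; auto.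
by left; apply: finlt_addl.
Qed.

Lemma plt_padd_pos x y :
  plt (pzero A) y -> x <> PNeg A -> x <> PPos A -> plt x (padd y x).
Proof.
case: x => [||a] //; case: y => [||s] //= pos _ _; have := finlt_addl a pos.
have -> : [ffun j => (a j + [ffun=> 0%R] j)%R] = a.
  by apply/ffunP => j; rewrite !ffunE addr0.
have -> // : [ffun j => (s j + a j)%R] = [ffun j => (a j + s j)%R].
by apply/ffunP => j; rewrite !ffunE addrC.
Qed.

Lemma finprof_cons (u : option V) p : finprof (u :: p) = padd (vprof u) (finprof p).
Proof. by congr PFin; apply/ffunP => j; rewrite !ffunE /= PoszD; case: u. Qed.

Lemma ple_telescope (u : nat -> option V) (a : nat -> prof A) :
  (forall i, ple (padd (vprof (u i)) (a i.+1)) (a i)) ->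
  forall i n, ple (padd (finprof [seq u t | t <- iota i n]) (a (i + n))) (a i).
Proof.
move=> step i n; elim: n i => [|n IHn] i; first by rewrite addn0 padd0p; right.
rewrite [iota i _]/= map_cons finprof_cons -paddA -addSnnS.
exact: ple_trans (ple_padd2l _ (IHn i.+1)) (step i).
Qed.

Lemma ocol_lt (u : option V) : ocol u < (ncol A).+1.
Proof. by case: u => [v|] //=; rewrite ltnS ltnW. Qed.

Lemma finprof_gt0 (p : seq (option V)) v : Some v \in p -> ~~ odd (Defs.col v) ->
  (forall u, u \in p -> ocol u <= Defs.col v) -> plt (pzero A) (finprof p).
Proof.
move=> vp evv pmax; exists (Defs.col v); rewrite !ffunE.
have pos : 0 < count (fun u => if u is Some w then Defs.col w == Defs.col v else false) p.
  by rewrite -has_count; apply/hasP; exists (Some v).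
split=> [j vj|]; last first.
  by rewrite (negbTE evv) ltz_nat pos; split=> // /eqP; rewrite lt_eqF ?ltz_nat.
rewrite !ffunE (_ : count _ p = 0) //; apply/eqP; rewrite -leqn0 leqNgt -has_count.
apply/hasPn => -[w wp|//]; apply/negP => /eqP cw.
by have := pmax _ wp; rewrite /= cw leqNgt vj.
Qed.

End Profiles.

Lemma descent_not_won0 (A : arena) (val : vtx A -> prof A) (f : nat -> vtx A) :
  (forall v, val v <> PNeg A) -> plt (val (f 0)) (PPos A) ->
  (forall i, ple (padd (vprof (Some (f i))) (val (f i.+1))) (val (f i))) ->
  ~ won0 (fun i => Defs.col (f i)).
Proof.
move=> valN val0 step [k [iok [evk maxk]]].
have [i [j [ij fij fik topk]]] :=
  infoften_top_cycle f (fun i => ltn_ord (Defs.col (f i))) iok maxk.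
have descent := ple_telescope (u := fun t => Some (f t)) (a := fun t => val (f t)) step.
have valP : val (f i) <> PPos A.
  move=> Pi; have := descent 0 i; rewrite add0n Pi [padd _ _]/= => le0.
  exact: plt_irr (ple_plt_trans le0 val0).
have := descent i (j - i); rewrite subnKC ?(ltnW ij) // -fij => cyc.
apply: plt_irr (plt_ple_trans (plt_padd_pos _ (valN _) valP) cyc).
apply: (@finprof_gt0 _ _ (f i)); rewrite ?fik //.
  by rewrite map_f // mem_iota leqnn subnKC ?(ltnW ij).
by move=> u /mapP[t]; rewrite mem_iota => /andP[it _] ->; rewrite topk.
Qed.

Section Plays.
Variable A : arena.
Notation V := (vtx A).
Variable sigma : rel (option V).
Hypothesis sigmaR : reasonable sigma.

(* An odd top recurring colour would close a 1-dominated cycle of A_⊥|σ. *)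
Lemma infinite_play_won0 tau (f : nat -> option V) : strat1 tau ->
  (forall i, gst sigma tau (f i) (f i.+1)) -> won0 (fun i => ocol (f i)).
Proof.
move=> [tauE1 _] fG.
have [k [iok maxk]] := infoften_max (fun i => ocol_lt (f i)).
exists k; split=> //; split=> //; apply/negP => oddk.
have [i [j [ij fij fik topk]]] :=
  infoften_top_cycle f (fun i => ocol_lt (f i)) iok maxk.
apply: sigmaR; exists (f i), [seq f t | t <- iota i.+1 (j - i)]; split.
- by rewrite -subn_gt0 in ij; case: (j - i) ij.
- by apply: path_map_iota => t; case/orP: (fG t) => [->|/tauE1 ->]; rewrite ?orbT.
- by rewrite last_map_iota subnKC ?(ltnW ij).
rewrite foldrE big_map (_ : \max_(_ <- _) _ = k) //; apply/eqP; rewrite eqn_leq.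
rewrite -{2}fik (leq_bigmax_seq (f i)) ?mem_head // andbT.
apply/bigmax_leqP_seq => u /predU1P[-> _|/mapP[t + ->] _]; first by rewrite fik.
by rewrite mem_iota => /andP[it _]; apply/topk/ltnW.
Qed.

Lemma play_prof_neq_neg tau u x : strat1 tau -> play_prof sigma tau u x -> x <> PNeg A.
Proof.
move=> tauS [[p [_ [_ ->]]] //|[f [_ [fG [won _]]]]].
by rewrite won //; apply: infinite_play_won0 fG.
Qed.

(* Either some infinite play starts at [u], and +oo is attained since all
   infinite plays are won, or every path from [u] is shorter than the number of
   vertices, so the maximal plays range over a finite type. *)
Lemma play_prof_max tau u : strat1 tau -> exists M, isMax (play_prof sigma tau u) M.
Proof.
move=> tauS; set G := gst sigma tau.
have [[f [f0 fG]]|noinf] :=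
  classic (exists f : nat -> option V, f 0 = u /\ forall i, G (f i) (f i.+1)).
  exists (PPos A); split=> [|y _]; last exact: ple_PPos.
  right; exists f; do 3!split=> //.
  by move=> lost; case: lost; apply: infinite_play_won0 fG.
pose N := #|{: option V}|.
have short p : path G u p -> size p <= N.
  move=> Gp; rewrite leqNgt; apply/negP => /ltnW long.
  by apply: noinf; apply: long_path_infinite Gp long.
have [m Gm longest] := @fin_argmax (N.-bseq (option V))
  (fun p q => size p <= size q) (fun p => path G u p)
  (fun p q => orP (leq_total _ _)) (fun _ _ _ => @leq_trans _ _ _)
  (ex_intro _ [bseq] isT).
have maxm w : ~~ G (last u m) w.
  apply/negP => Gw; have Gmw : path G u (rcons m w) by rewrite rcons_path Gm.
  by have := longest (Bseq (short _ Gmw)) Gmw; rewrite /= size_rcons ltnn.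
have [M [GM maxM] bestM] := @fin_argmax (N.-bseq (option V))
  (fun p q => ple (finprof (u :: p)) (finprof (u :: q)))
  (fun p => path G u p /\ forall w, ~~ G (last u p) w)
  (fun _ _ => ple_total _ _) (fun _ _ _ => @ple_trans _ _ _ _)
  (ex_intro _ m (conj Gm maxm)).
exists (finprof (u :: M)); split=> [|y]; first by left; exists M.
case=> [[p [Gp [maxp ->]]]|[f [f0 [fG _]]]]; last by case: noinf; exists f.
exact: (bestM (Bseq (short _ Gp))).
Qed.

Lemma play_cons tau a w y : gst sigma tau (Some a) w -> play_prof sigma tau w y ->
  play_prof sigma tau (Some a) (padd (vprof (Some a)) y).
Proof.
move=> Gaw [[p [Gp [maxp ->]]]|[f [f0 [fG [won lost]]]]].
  by left; exists (w :: p); rewrite [path _ _ _]/= Gaw Gp (finprof_cons (Some a)).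
pose af n := if n is n'.+1 then f n' else Some a.
have won_af := @won0_cons (fun n => ocol (f n)) (fun n => ocol (af n)) (fun _ => erefl).
right; exists af; split=> //; split=> [[|n] //=|]; first by rewrite f0.
split=> [/won_af/won ->|/(contra_not (proj2 won_af))/lost ->] //.
Qed.

End Plays.

Section Valuation.
Variable A : arena.
Notation V := (vtx A).
Hypothesis succ : forall v : V, exists w, edge v w.
Variable sigma : rel (option V).
Hypothesis sigmaR : reasonable sigma.

Lemma isMax_uniq (P : prof A -> Prop) x y : isMax P x -> isMax P y -> x = y.
Proof. by move=> [Px maxx] [Py maxy]; apply: ple_antisym; [apply: maxy|apply: maxx]. Qed.

(* Strategies of player 1 are relations on a finite type, hence encoded by
   finite functions: the minimum over them is a minimum over a finite set. *)
Lemma val_spec_exists s : exists x, val_spec sigma s x.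
Proof.
pose T := {ffun option V * option V -> bool}.
pose rel_of (t : T) : rel (option V) := fun u w => t (u, w).
have rel_ofK (tau : rel (option V)) : rel_of [ffun uw => tau uw.1 uw.2] = tau.
  by do 2![apply: functional_extensionality => ?]; rewrite /rel_of ffunE.
pose mx t := epsilon (inhabits (PPos A)) (isMax (play_prof sigma (rel_of t) (Some s))).
have mxP t : strat1 (rel_of t) -> isMax (play_prof sigma (rel_of t) (Some s)) (mx t).
  by move=> tS; apply: epsilon_spec; apply: play_prof_max.
have encodeS tau : strat1 tau -> strat1 (rel_of [ffun uw => tau uw.1 uw.2]).
  by rewrite rel_ofK.
have E1S : strat1 (@E1 A).
  by split=> // v ov; have [w vw] := succ v; exists (Some w); rewrite /E1 ov.
have [t tS best] := @fin_argmax T (fun t1 t2 => ple (mx t2) (mx t1))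
  (fun t => strat1 (rel_of t)) (fun _ _ => ple_total _ _)
  (fun _ _ _ t12 t23 => ple_trans t23 t12)
  (ex_intro _ [ffun uw => E1 uw.1 uw.2] (encodeS _ E1S)).
exists (mx t); split=> [|y [tau [tauS maxy]]].
  by exists (rel_of t); split=> //; apply: mxP.
have := mxP _ (encodeS _ tauS); rewrite rel_ofK => /(isMax_uniq maxy) ->.
exact: best (encodeS _ tauS).
Qed.

Lemma Val_spec s : val_spec sigma s (Val sigma (Some s)).
Proof. exact: epsilon_spec (val_spec_exists s). Qed.

Lemma Val_neq_neg u : Val sigma u <> PNeg A.
Proof.
case: u => [s|//]; have [[tau [tauS [playV _]]] _] := Val_spec s.
exact (play_prof_neq_neg sigmaR tauS playV).
Qed.

(* Player 1 moves along the first edge of an optimal counter-strategy. *)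
Lemma Val_V1_succ a : own a -> exists b, edge a b /\
  ple (padd (vprof (Some a)) (Val sigma (Some b))) (Val sigma (Some a)).
Proof.
move=> oa; have [[tau [tauS [_ maxa]]] _] := Val_spec a.
have [t tat] := tauS.2 a oa.
have := tauS.1 _ _ tat; case: t tat => [b tab /andP[_ ab]|//].
exists b; split=> //.
have [Mb maxMb] := play_prof_max sigmaR (Some b) tauS.
have [_ minb] := Val_spec b.
apply: ple_trans (ple_padd2l _ (minb Mb _)) (maxa _ _); first by exists tau.
by apply: play_cons maxMb.1; rewrite /gst tab orbT.
Qed.

End Valuation.

Section NoImprovement.
Variable A : arena.
Notation V := (vtx A).
Hypothesis succ : forall v : V, exists w, edge v w.
Variable sigma : rel (option V).
Hypothesis sigmaR : reasonable sigma.
Hypothesis no_improvement : forall u w, ~ improvement sigma u w.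

Lemma Val_V0_edge a b : ~~ own a -> edge a b ->
  ple (padd (vprof (Some a)) (Val sigma (Some b))) (Val sigma (Some a)).
Proof.
move=> oa ab; apply: nplt_ple => lt.
by apply: (no_improvement (u := Some a) (w := Some b)); split=> //; rewrite /E0 /= oa ab.
Qed.

Lemma descending_play str s : pstrat0 str ->
  exists f, consistent_play str s f /\
    forall i, ple (padd (vprof (Some (f i))) (Val sigma (Some (f i.+1))))
                  (Val sigma (Some (f i))).
Proof.
move=> strS.
have [ch chP] : exists ch : V -> V, forall a, own a -> edge a (ch a) /\
    ple (padd (vprof (Some a)) (Val sigma (Some (ch a)))) (Val sigma (Some a)).
  exists (fun a => epsilon (inhabits a) (fun b => edge a b /\
    ple (padd (vprof (Some a)) (Val sigma (Some b))) (Val sigma (Some a)))).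
  by move=> a /(Val_V1_succ succ sigmaR); apply: epsilon_spec.
have [f [f0 fS]] := history_recursion s (fun h v => if own v then ch v else str h v).
exists f; split=> [|i]; last first.
  rewrite fS; case: ifP => oi; first by case: (chP _ oi).
  by apply: Val_V0_edge; [rewrite oi|apply: strS].
split=> // i; rewrite fS; case: ifP => oi; last by split=> //; apply: strS.
by split=> //; case: (chP _ oi).
Qed.

End NoImprovement.

Theorem mainTheorem10 (A : arena)
  (Hsucc : forall v : vtx A, exists w, edge v w)
  (sigma : rel (option (vtx A)))
  (Hsigma : strat0 sigma)
  (Hreas : reasonable sigma)
  (Hex : exists s : vtx A, W0 s /\ plt (Val sigma (Some s)) (PPos A)) :
  exists u w : option (vtx A), improvement sigma u w.
Proof.
apply: NNPP => noimp.
have {}noimp u w : ~ improvement sigma u w by move=> imp; apply: noimp; exists u, w.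
have [s [[str [strS strW]] Vs]] := Hex.
have [f [fplay fdesc]] := descending_play Hsucc Hreas noimp s strS.
apply: (descent_not_won0 (val := fun v => Val sigma (Some v)) _ _ fdesc (strW f fplay)).
  by move=> v; apply: Val_neq_neg.
by rewrite fplay.1.
Qed.
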